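(* For every integer $n\ge 0$, \[ \sum_{k=0}^{n}\Big(-\frac{1}{4}\Big)^k\binom{n}{k}\binom{2k}{k}H_{2k} =\frac{1}{2^{1+2n}}\binom{2n}{n}\{3H_n-4H_{2n}\}. \]
   Context: For an integer $m\ge 0$, $H_m$ denotes the $m$-th harmonic number: $H_0=0$ and $H_m=\sum_{j=1}^m \frac1j$ for $m\ge1$. $\binom{n}{k}$ is the usual binomial coefficient. *)

From HB Require Import structures.
From mathcomp Require Import all_boot all_order all_algebra.
Set Implicit Arguments. Unset Strict Implicit. Unset Printing Implicit Defensive.
Import Order.TTheory GRing.Theory Num.Theory.
Local Open Scope ring_scope.

Definition harmonic (m : nat) : rat := \sum_(1 <= j < m.+1) (j%:R)^-1.

From HB Require Import structures.
From mathcomp Require Import all_boot all_order all_algebra.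
From mathcomp Require Import ring lra.
Import Order.TTheory GRing.Theory Num.Theory.
Local Open Scope ring_scope.

(* Write a(n,k) = cterm n k = (-1/4)^k C(n,k) C(2k,k), T(n) = sum_k a(n,k)
   and S(n) = sum_k a(n,k) H_{2k}.  Zeilberger's algorithm gives a certificate
   g with 2(n+1) a(n+1,k) - (2n+1) a(n,k) = g(n,k+1) - g(n,k), whence
   T(n) = C(2n,n)/4^n.  Multiplying this relation by H_{2k} and summing by
   parts, S satisfies the same recurrence up to the inhomogeneous term
   sum_k -g(n,k+1) (H_{2k+2} - H_{2k}); this is a hypergeometric sum which
   Gosper's algorithm evaluates as a multiple of T(n+1).  The resulting
   first-order recurrence is solved by S(n) = T(n) (3 H_n - 4 H_{2n}) / 2. *)

Lemma mul_bin_central_succ k :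
  (k.+1 * 'C(k.+1.*2, k.+1) = 2 * (k.*2.+1 * 'C(k.*2, k)))%N.
Proof.
have sym : 'C(k.*2.+1, k.+1) = 'C(k.*2.+1, k).
  by rewrite -bin_sub -addnn ?subSS ?addnK // ltnS leq_addr.
by rewrite doubleS binS sym mul_bin_diag -sym addnn -mul2n mulnCA.
Qed.

Lemma natr_doubleS (R : pzSemiRingType) k : k.*2.+1%:R = 2 * k%:R + 1 :> R.
Proof. by rewrite -addn1 natrD -mul2n natrM. Qed.

Lemma natr_double_sub1_neq0 (R : realDomainType) j : 2 * j%:R - 1 != 0 :> R.
Proof.
case: j => [|j]; first by rewrite mulr0 sub0r oppr_eq0 oner_eq0.
have := ler0n R j; rewrite -natr1 => j_ge0; apply: lt0r_neq0; lra.
Qed.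

Lemma sumr_by_parts (R : pzRingType) m n (g h : nat -> R) : (m <= n)%N ->
  \sum_(m <= k < n) (g k.+1 - g k) * h k
  = g n * h n - g m * h m - \sum_(m <= k < n) g k.+1 * (h k.+1 - h k).
Proof.
move=> le_mn; apply/eqP; rewrite eq_sym subr_eq -big_split eq_sym; apply/eqP.
apply: (telescope_sumr_eq (fun k => g k * h k)) => // k _.
by rewrite /= mulrBl mulrBr addrC addrA subrK.
Qed.

Section NatrBinomial.
Variable R : numFieldType.

Lemma natr_bin_central_succ k :
  'C(k.+1.*2, k.+1)%:R = 2 * (2 * k%:R + 1) * 'C(k.*2, k)%:R / k.+1%:R :> R.
Proof.
rewrite -natr_doubleS -!natrM -mulnA -mul_bin_central_succ mulnC natrM.
by rewrite mulfK ?pnatr_eq0.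
Qed.

Lemma natr_binSr n k :
  'C(n, k.+1)%:R = (n%:R - k%:R) * 'C(n, k)%:R / k.+1%:R :> R.
Proof.
rewrite -[LHS](mulKf (_ : k.+1%:R != 0)) ?pnatr_eq0 // -natrM mul_bin_left natrM mulrC.
by case: (leqP k n) => [/natrB -> //|lt_nk]; rewrite bin_small // !mulr0 mul0r.
Qed.

Lemma natr_bin_predn n k :
  'C(n, k)%:R = (n.+1%:R - k%:R) * 'C(n.+1, k)%:R / n.+1%:R :> R.
Proof.
rewrite -[LHS](mulKf (_ : n.+1%:R != 0)) ?pnatr_eq0 //.
rewrite -natrM (mul_bin_down n.+1) natrM mulrC.
by case: (leqP k n.+1) => [/natrB -> //|lt_nk]; rewrite bin_small // !mulr0 mul0r.
Qed.

End NatrBinomial.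

Lemma harmonicS m : harmonic m.+1 = harmonic m + m.+1%:R^-1.
Proof. by rewrite /harmonic big_nat_recr. Qed.

Lemma harmonic_doubleS m :
  harmonic m.+1.*2 = harmonic m.*2 + (2 * m%:R + 1)^-1 + (2 * m.+1%:R)^-1.
Proof.
by rewrite doubleS !harmonicS natr_doubleS -doubleS -[m.+1.*2]mul2n natrM.
Qed.

Definition cterm (n k : nat) : rat :=
  (- (1 / 4)) ^+ k * 'C(n, k)%:R * 'C(k.*2, k)%:R.

Lemma cterm_succ n k :
  cterm n k.+1 = - ((n%:R - k%:R) * (2 * k%:R + 1)) / (2 * k.+1%:R ^+ 2) * cterm n k.
Proof.
rewrite /cterm exprS natr_binSr natr_bin_central_succ.
by field; rewrite nat1r pnatr_eq0.
Qed.

Lemma cterm_predn n k : cterm n k = (n.+1%:R - k%:R) / n.+1%:R * cterm n.+1 k.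
Proof.
rewrite /cterm natr_bin_predn.
by field; rewrite nat1r pnatr_eq0.
Qed.

Lemma cterm_small n k : (n < k)%N -> cterm n k = 0.
Proof. by move=> lt_nk; rewrite /cterm bin_small // mulr0 mul0r. Qed.

Definition zeil_cert (n k : nat) : rat := - 2 * k%:R ^+ 2 / n.+1%:R * cterm n.+1 k.

Lemma cterm_recurrence n k :
  2 * n.+1%:R * cterm n.+1 k - (2 * n%:R + 1) * cterm n k
  = zeil_cert n k.+1 - zeil_cert n k.
Proof.
rewrite /zeil_cert cterm_succ (cterm_predn n k).
by field; rewrite !nat1r !pnatr_eq0.
Qed.

Lemma sum_cterm_succ n :
  2 * n.+1%:R * \sum_(0 <= k < n.+2) cterm n.+1 k
  = (2 * n%:R + 1) * \sum_(0 <= k < n.+1) cterm n k.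
Proof.
have -> : \sum_(0 <= k < n.+1) cterm n k = \sum_(0 <= k < n.+2) cterm n k.
  by rewrite [RHS]big_nat_recr //= cterm_small ?addr0.
apply/eqP; rewrite -subr_eq0; apply/eqP.
rewrite !mulr_sumr -sumrB (telescope_sumr_eq (zeil_cert n)) => [|//|k _].
  by rewrite /zeil_cert cterm_small // mulr0 expr0n /= mulr0 !mul0r subrr.
exact: cterm_recurrence.
Qed.

Lemma sum_cterm n : \sum_(0 <= k < n.+1) cterm n k = 'C(n.*2, n)%:R / 4 ^+ n.
Proof.
elim: n => [|n IH]; first by rewrite big_nat1 /cterm /=.
apply: (mulfI (_ : 2 * n.+1%:R != 0)); first by rewrite mulf_neq0 ?pnatr_eq0.
rewrite sum_cterm_succ IH natr_bin_central_succ exprS.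
by field; rewrite expf_neq0 // nat1r pnatr_eq0.
Qed.

Definition gosper_cert (m j : nat) : rat :=
  - 2 * j%:R ^+ 2 * (4 * j%:R + 2 * m%:R - 3) / ((2 * m%:R - 1) * (2 * j%:R - 1))
  * cterm m j.

Lemma cterm_gosper m j :
  cterm m j * (j%:R * (4 * j%:R - 1) / (2 * j%:R - 1))
    + m%:R * (2 * m%:R + 1) / (2 * m%:R - 1) * cterm m j
  = gosper_cert m j.+1 - gosper_cert m j.
Proof.
rewrite /gosper_cert cterm_succ.
by field; rewrite nat1r !natr_double_sub1_neq0 pnatr_eq0.
Qed.

Lemma sum_cterm_weighted m :
  \sum_(0 <= j < m.+1) cterm m j * (j%:R * (4 * j%:R - 1) / (2 * j%:R - 1))
  = - (m%:R * (2 * m%:R + 1) / (2 * m%:R - 1)) * \sum_(0 <= j < m.+1) cterm m j.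
Proof.
apply/eqP; rewrite mulNr -subr_eq0 opprK mulr_sumr -big_split /=; apply/eqP.
rewrite (telescope_sumr_eq (gosper_cert m)) => [|//|j _]; last exact: cterm_gosper.
by rewrite /gosper_cert cterm_small // mulr0 expr0n /= mulr0 !mul0r subrr.
Qed.

Lemma zeil_cert_harmonic_defect n k :
  - zeil_cert n k.+1 * (harmonic k.+1.*2 - harmonic k.*2)
  = cterm n.+1 k.+1 * (k.+1%:R * (4 * k.+1%:R - 1) / (2 * k.+1%:R - 1)) / n.+1%:R.
Proof.
rewrite /zeil_cert harmonic_doubleS.
by field; rewrite !nat1r natr_double_sub1_neq0 !pnatr_eq0.
Qed.

Definition sum_cterm_harmonic (n : nat) : rat :=
  \sum_(0 <= k < n.+1) cterm n k * harmonic k.*2.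

Lemma sum_cterm_harmonic_succ n :
  2 * n.+1%:R * sum_cterm_harmonic n.+1 - (2 * n%:R + 1) * sum_cterm_harmonic n
  = - (n.+1%:R * (2 * n.+1%:R + 1) / (2 * n.+1%:R - 1))
    * (\sum_(0 <= k < n.+2) cterm n.+1 k) / n.+1%:R.
Proof.
have -> : sum_cterm_harmonic n = \sum_(0 <= k < n.+2) cterm n k * harmonic k.*2.
  by rewrite [RHS]big_nat_recr //= cterm_small ?mul0r ?addr0.
rewrite /sum_cterm_harmonic [in LHS]mulr_sumr [in LHS]mulr_sumr -sumrB.
under eq_bigr do rewrite mulrA [X in _ - X]mulrA -mulrBl cterm_recurrence.
have cert0 : zeil_cert n 0 = 0 by rewrite /zeil_cert expr0n /= mulr0 !mul0r.
have certN : zeil_cert n n.+2 = 0 by rewrite /zeil_cert cterm_small ?mulr0.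
rewrite sumr_by_parts // cert0 certN !mul0r subrr sub0r -sumrN.
under eq_bigr do rewrite -mulNr zeil_cert_harmonic_defect.
rewrite -mulr_suml.
pose w j : rat := j%:R * (4 * j%:R - 1) / (2 * j%:R - 1).
have shift : \sum_(0 <= k < n.+2) cterm n.+1 k.+1 * w k.+1
             = \sum_(0 <= j < n.+2) cterm n.+1 j * w j.
  rewrite big_nat_recr //= cterm_small // mul0r addr0.
  by rewrite [RHS]big_nat_recl //= /w !mul0r add0r.
by rewrite shift sum_cterm_weighted.
Qed.

Lemma harmonic_combo_succ n :
  3 * harmonic n.+1 - 4 * harmonic n.+1.*2
  = 3 * harmonic n - 4 * harmonic n.*2 - (2 * n%:R + 3) / (n.+1%:R * (2 * n%:R + 1)).
Proof.
rewrite harmonicS harmonic_doubleS.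
by field; rewrite -natr_doubleS nat1r !pnatr_eq0.
Qed.

Lemma sum_cterm_harmonicE n :
  sum_cterm_harmonic n
  = (3 * harmonic n - 4 * harmonic n.*2) / 2 * \sum_(0 <= k < n.+1) cterm n k.
Proof.
elim: n => [|n IH].
  by rewrite /sum_cterm_harmonic /harmonic !big_nat1 /= !big_geq.
have recT := sum_cterm_succ n; have recS := sum_cterm_harmonic_succ n.
rewrite IH mulrCA -recT in recS; move/eqP: recS; rewrite subr_eq => /eqP recS.
apply: (mulfI (_ : 2 * n.+1%:R != 0)); first by rewrite mulf_neq0 ?pnatr_eq0.
rewrite recS harmonic_combo_succ.
by field; rewrite -natr_doubleS nat1r !pnatr_eq0.
Qed.

Theorem theorem7 (n : nat) :
  \sum_(0 <= k < n.+1)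
     (- (1 / 4 : rat)) ^+ k * ('C(n, k))%:R * ('C(k.*2, k))%:R * harmonic k.*2
  = (2 ^+ (1 + n.*2))^-1 * ('C(n.*2, n))%:R
      * (3 * harmonic n - 4 * harmonic n.*2).
Proof.
have pow2 : (2 : rat) ^+ (1 + n.*2) = 2 * 4 ^+ n by rewrite exprD -mul2n exprM.
rewrite -/(sum_cterm_harmonic n) sum_cterm_harmonicE sum_cterm pow2.
by field; rewrite expf_neq0.
Qed.
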